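(* Let $0<\lambda<1$ and $c>0$. Let $g:[0,\infty)\to[1,\infty)$, $g(x) = [1 + (1-\lambda)x]^{1/(1-\lambda)}$, and let $h(x) = \frac{W(g(x))}{\exp[c\, g(x)^{1-\lambda}]} - 1$ for $x \ge 0$. Then for every $s\in\mathbb{C}$ with $\Re(s)>0$, the Laplace transform $\mathscr{L}(s) = \int_0^\infty h(x) e^{-sx}\,dx$ equals $$\mathscr{L}(s) = \frac{c(1-\lambda)}{c(1-\lambda)+s}\,\Psi(s) - \frac1s.$$
   Context: For $x>0$ define $w(x) = \frac{c(1-\lambda)\log(x)\exp(c x^{1-\lambda})}{x^\lambda}$ and $W(x) = \sum_{p \le x} w(p)$ (sum over primes). For $\Re(s)>0$ define $\Psi(s) = \sum_p \frac{\log p}{p^\lambda \exp\left[s\,\frac{p^{1-\lambda}-1}{1-\lambda}\right]}$, the sum over all primes $p$. *)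

From Stdlib Require Import Reals ZArith Znumtheory.
From Coquelicot Require Import Coquelicot.
Open Scope R_scope.

Definition Cexp (z : C) : C :=
  (exp (Re z) * cos (Im z), exp (Re z) * sin (Im z)).

Definition isprime (n : nat) : bool :=
  if prime_dec (Z.of_nat n) then true else false.

Definition w (lam c x : R) : R :=
  c * (1 - lam) * ln x * exp (c * Rpower x (1 - lam)) / Rpower x lam.

Definition W (lam c x : R) : R :=
  sum_f_R0 (fun n => if isprime n then w lam c (INR n) else 0)
           (Z.to_nat (Int_part x)).

Definition g (lam x : R) : R := Rpower (1 + (1 - lam) * x) (1 / (1 - lam)).

Definition h (lam c x : R) : R :=
  W lam c (g lam x) / exp (c * Rpower (g lam x) (1 - lam)) - 1.

Definition Psi_term (lam : R) (s : C) (n : nat) : C :=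
  if isprime n then
    RtoC (ln (INR n) / Rpower (INR n) lam)
    * Cinv (Cexp (s * RtoC ((Rpower (INR n) (1 - lam) - 1) / (1 - lam))))
  else RtoC 0.

Definition laplace_integrand (lam c : R) (s : C) (x : R) : C :=
  RtoC (h lam c x) * Cexp (Copp s * RtoC x).

From Stdlib Require Import Reals Lra Lia Psatz ZArith Znumtheory.
From Coquelicot Require Import Coquelicot.
Open Scope R_scope.

(* Put kappa = c(1-lam) and zeta = kappa + s.  Since g(x)^(1-lam) = 1 + (1-lam) x,
   the normalizing factor of h is exp[-c g(x)^(1-lam)] = e^(-c) e^(-kappa x); and a
   prime p is counted in W(g(x)) exactly when x >= ginv p, the point where g
   reaches p.  So on [0, b] the integrand h(x) e^(-sx) is a finite sum of
   truncated exponentials a_p e^(-zeta x) 1[x >= ginv p], with a_p = w(p) e^(-c),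
   minus e^(-sx), and it integrates in closed form.  The identity
   a_p e^(-zeta ginv p) = kappa * (p-th term of Psi(s)) turns the main part of
   that closed form into (kappa / zeta) times a partial sum of Psi(s).  As b -> +oo
   these partial sums converge to Psi(s) (its terms are dominated by a series
   decaying faster than 1/n^2), while the boundary terms at b decay like
   e^(-Re(s) b / 2) and e^(-Re(s) b). *)

Lemma Cexp_add (u v : C) : Cexp (u + v) = (Cexp u * Cexp v)%C.
Proof.
  destruct u as [a1 a2], v as [b1 b2]; unfold Cexp, Cplus, Cmult; simpl.
  rewrite exp_plus, cos_plus, sin_plus. f_equal; ring.
Qed.

Lemma Cexp_RtoC (r : R) : Cexp (RtoC r) = RtoC (exp r).
Proof. unfold Cexp, RtoC; simpl. rewrite cos_0, sin_0. f_equal; ring. Qed.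

Lemma Cmod_Cexp (u : C) : Cmod (Cexp u) = exp (Re u).
Proof.
  destruct u as [a b]; unfold Cexp, Cmod; simpl.
  transitivity (sqrt (exp a ^ 2)); [f_equal | apply sqrt_pow2, Rlt_le, exp_pos].
  transitivity (exp a ^ 2 * (sin b ^ 2 + cos b ^ 2)); [ring|].
  rewrite <- !Rsqr_pow2, sin2_cos2. ring.
Qed.

Lemma Cexp_neq0 (u : C) : Cexp u <> 0%C.
Proof.
  intro H. assert (H1 := Cmod_Cexp u). rewrite H, Cmod_0 in H1.
  generalize (exp_pos (Re u)); lra.
Qed.

Lemma Cinv_Cexp (u : C) : Cinv (Cexp u) = Cexp (- u).
Proof.
  assert (Hinv : (Cexp u * Cexp (- u))%C = 1%C).
  { rewrite <- Cexp_add, Cplus_opp_r, Cexp_RtoC, exp_0. reflexivity. }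
  rewrite <- (Cmult_1_r (/ Cexp u)), <- Hinv, Cmult_assoc, Cinv_l
    by apply Cexp_neq0.
  apply Cmult_1_l.
Qed.

Lemma is_RInt_Cexp_derivative (D B : C) (p q : R) :
  is_RInt (V := C_R_NormedModule) (fun x => D * B * Cexp (B * RtoC x))%C p q
    (D * Cexp (B * RtoC q) - D * Cexp (B * RtoC p))%C.
Proof.
  destruct D as [d1 d2], B as [b1 b2].
  set (F1 := fun x => d1 * (exp (b1 * x) * cos (b2 * x)) - d2 * (exp (b1 * x) * sin (b2 * x))).
  set (F2 := fun x => d1 * (exp (b1 * x) * sin (b2 * x)) + d2 * (exp (b1 * x) * cos (b2 * x))).
  set (G1 := fun x => (d1*b1 - d2*b2) * (exp (b1 * x) * cos (b2 * x))
                      - (d1*b2 + d2*b1) * (exp (b1 * x) * sin (b2 * x))).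
  set (G2 := fun x => (d1*b1 - d2*b2) * (exp (b1 * x) * sin (b2 * x))
                      + (d1*b2 + d2*b1) * (exp (b1 * x) * cos (b2 * x))).
  assert (HG : forall x, ((d1, d2) * (b1, b2) * Cexp ((b1, b2) * RtoC x))%C = (G1 x, G2 x)).
  { intro x. unfold G1, G2, Cexp, Cmult, RtoC; simpl.
    rewrite Rmult_0_r, Rminus_0_r, Rmult_0_r, Rplus_0_l. f_equal; ring. }
  assert (HF : forall x, ((d1, d2) * Cexp ((b1, b2) * RtoC x))%C = (F1 x, F2 x)).
  { intro x. unfold F1, F2, Cexp, Cmult, RtoC; simpl.
    rewrite Rmult_0_r, Rminus_0_r, Rmult_0_r, Rplus_0_l. f_equal; ring. }
  eapply is_RInt_ext. { intros x _. symmetry. apply HG. }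
  rewrite !HF. unfold Cminus, Cplus, Copp; simpl.
  apply (is_RInt_fct_extend_pair (U := R_NormedModule) (V := R_NormedModule)); simpl;
    apply (is_RInt_derive (V := R_CompleteNormedModule)); intros x _.
  - unfold F1, G1. auto_derive; auto. ring.
  - apply (ex_derive_continuous (K := R_AbsRing) (V := R_NormedModule)).
    unfold G1. auto_derive; auto.
  - unfold F2, G2. auto_derive; auto. ring.
  - apply (ex_derive_continuous (K := R_AbsRing) (V := R_NormedModule)).
    unfold G2. auto_derive; auto.
Qed.

Lemma is_RInt_Cexp (D B : C) (p q : R) : B <> 0%C ->
  is_RInt (V := C_R_NormedModule) (fun x => D * Cexp (B * RtoC x))%C p q
    (D / B * (Cexp (B * RtoC q) - Cexp (B * RtoC p)))%C.
Proof.
  intro HB.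
  replace (D / B * (Cexp (B * RtoC q) - Cexp (B * RtoC p)))%C
    with (D / B * Cexp (B * RtoC q) - D / B * Cexp (B * RtoC p))%C by ring.
  eapply is_RInt_ext; [|apply is_RInt_Cexp_derivative].
  intros x _. change (@eq C (D / B * B * Cexp (B * RtoC x)) (D * Cexp (B * RtoC x)))%C.
  field. exact HB.
Qed.

Lemma Copp_neq0 (z : C) : z <> 0%C -> (- z)%C <> 0%C.
Proof. intros Hz Hopp. apply Hz. replace z with (- - z)%C by ring. rewrite Hopp. ring. Qed.

Lemma is_RInt_C_zero (p q : R) :
  is_RInt (V := C_R_NormedModule) (fun _ => RtoC 0) p q (RtoC 0).
Proof.
  assert (Hconst := is_RInt_const (V := C_R_NormedModule) p q (RtoC 0)).
  rewrite (scal_zero_r (V := C_R_NormedModule)) in Hconst. exact Hconst.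
Qed.

Lemma sum_n_C_succ (f : nat -> C) (N : nat) : sum_n f (S N) = (sum_n f N + f (S N))%C.
Proof. apply (sum_Sn (G := C_AbelianMonoid)). Qed.

Lemma sum_n_C_lin (a b d : C) (f g : nat -> C) (N : nat) :
  sum_n (fun n => (a * f n - b * g n) / d)%C N = ((a * sum_n f N - b * sum_n g N) / d)%C.
Proof.
  induction N as [|N IH]; [rewrite !sum_O; reflexivity|].
  rewrite !sum_n_C_succ, IH.
  match goal with |- ?u = ?v => change (@eq C u v) end. unfold Cdiv. ring.
Qed.

Lemma RtoC_sum_f_R0_mult (r : nat -> R) (K : C) (N : nat) :
  (RtoC (sum_f_R0 r N) * K)%C = sum_n (fun n => RtoC (r n) * K)%C N.
Proof.
  induction N as [|N IH]; [rewrite sum_O; reflexivity|].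
  rewrite sum_n_C_succ, <- IH. simpl. rewrite RtoC_plus.
  match goal with |- ?u = ?v => change (@eq C u v) end. ring.
Qed.

Lemma Cmod_sum_n_le (f : nat -> C) (N : nat) :
  Cmod (sum_n f N) <= sum_f_R0 (fun n => Cmod (f n)) N.
Proof.
  rewrite <- sum_n_Reals. apply (norm_sum_n_m (K := C_AbsRing) (V := C_NormedModule)).
Qed.

Lemma le_floor_iff (y : R) (n : nat) : 0 <= y ->
  (n <= Z.to_nat (Int_part y))%nat <-> INR n <= y.
Proof.
  intro Hy. destruct (base_Int_part y) as [Hlow Hup].
  assert (Hnonneg : (0 <= Int_part y)%Z).
  { assert (-1 < Int_part y)%Z by (apply lt_IZR; simpl; lra). lia. }
  assert (Hcast : INR (Z.to_nat (Int_part y)) = IZR (Int_part y))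
    by (rewrite INR_IZR_INZ, Z2Nat.id; auto).
  split.
  - intro Hn. apply le_INR in Hn. lra.
  - intro Hn. destruct (le_lt_dec n (Z.to_nat (Int_part y))) as [Hle|Hgt]; auto.
    exfalso. assert (Hz : (Int_part y + 1 <= Z.of_nat n)%Z) by lia.
    apply IZR_le in Hz. rewrite plus_IZR, <- INR_IZR_INZ in Hz. lra.
Qed.

Lemma sum_f_R0_truncate (F : nat -> R) (M N : nat) : (M <= N)%nat ->
  sum_f_R0 F M = sum_f_R0 (fun n => if le_dec n M then F n else 0) N.
Proof.
  induction N as [|N IH]; intro HMN.
  - replace M with 0%nat by lia. simpl. destruct (le_dec 0 0); [reflexivity | lia].
  - destruct (Nat.eq_dec M (S N)) as [->|HMN'].
    + apply sum_eq. intros i Hi. destruct (le_dec i (S N)); [reflexivity | lia].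
    + rewrite IH by lia. simpl. destruct (le_dec (S N) M); [lia | ring].
Qed.

Lemma Rpower_ge_1 (a e : R) : 1 <= a -> 0 <= e -> 1 <= Rpower a e.
Proof. intros. rewrite <- (Rpower_O a) by lra. apply Rle_Rpower; auto. Qed.

Lemma exp_le_mono (a b : R) : a <= b -> exp a <= exp b.
Proof. intros [Hlt | ->]; [left; apply exp_increasing, Hlt | lra]. Qed.

Lemma lt_exp_self (t : R) : t < exp t.
Proof.
  destruct (Req_dec t 0) as [-> | Ht]; [rewrite exp_0; lra|].
  generalize (exp_ineq1 t Ht); lra.
Qed.

Lemma isprime_ge_2 (n : nat) : isprime n = true -> (2 <= n)%nat.
Proof.
  unfold isprime. destruct (prime_dec (Z.of_nat n)) as [Hp|]; [|discriminate].
  intros _. apply prime_ge_2 in Hp. lia.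
Qed.

Lemma log_weight_nonneg (lam : R) (n : nat) : (1 <= n)%nat ->
  0 <= ln (INR n) / Rpower (INR n) lam.
Proof.
  intro Hn. apply (le_INR 1) in Hn. simpl in Hn.
  apply Rmult_le_pos; [rewrite <- ln_1; apply ln_le; lra|].
  left. apply Rinv_0_lt_compat. unfold Rpower. apply exp_pos.
Qed.

(* ginv lam n = (n^(1-lam) - 1) / (1 - lam) is the point where g reaches n,
   so the prime p enters W(g(x)) exactly when x >= ginv lam p. *)
Definition ginv (lam : R) (n : nat) : R := (Rpower (INR n) (1 - lam) - 1) / (1 - lam).

(* gfloor lam b = floor(g(b)) bounds the primes counted in W(g(x)), x <= b. *)
Definition gfloor (lam b : R) : nat := Z.to_nat (Int_part (g lam b)).

Section Reparametrization.
Variable lam : R.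
Hypothesis hlam0 : 0 < lam.
Hypothesis hlam1 : lam < 1.

Lemma g_pos (x : R) : 0 < g lam x.
Proof. unfold g, Rpower. apply exp_pos. Qed.

(* g(x)^(1-lam) = 1 + (1-lam) x: this linearizes the exponent in h. *)
Lemma g_Rpower (x : R) : 0 <= x -> Rpower (g lam x) (1 - lam) = 1 + (1 - lam) * x.
Proof.
  intro Hx. unfold g. rewrite Rpower_mult.
  replace (1 / (1 - lam) * (1 - lam)) with 1 by (field; lra).
  apply Rpower_1. nra.
Qed.

Lemma g_le_g (x y : R) : 0 <= x <= y -> g lam x <= g lam y.
Proof.
  intros. unfold g. apply Rle_Rpower_l; [left; apply Rdiv_lt_0_compat|]; nra.
Qed.

Lemma ginv_nonneg (n : nat) : (1 <= n)%nat -> 0 <= ginv lam n.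
Proof.
  intro Hn. apply (le_INR 1) in Hn. simpl in Hn. unfold ginv.
  apply Rdiv_le_0_compat; [|lra].
  assert (1 <= Rpower (INR n) (1 - lam)) by (apply Rpower_ge_1; lra). lra.
Qed.

Lemma le_g_iff (n : nat) (x : R) : (1 <= n)%nat -> 0 <= x ->
  INR n <= g lam x <-> ginv lam n <= x.
Proof.
  intros Hn Hx. apply (le_INR 1) in Hn. simpl in Hn.
  assert (Hg := g_pos x). assert (Hpow := g_Rpower x Hx).
  unfold ginv. set (A := Rpower (INR n) (1 - lam)).
  assert (HA : A - 1 = (1 - lam) * ((A - 1) / (1 - lam))) by (field; lra).
  split.
  - intro Hle. assert (A <= Rpower (g lam x) (1 - lam))
      by (apply Rle_Rpower_l; lra). nra.
  - intro Hle. destruct (Rle_lt_dec (INR n) (g lam x)) as [|Hlt]; auto.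
    assert (Rpower (g lam x) (1 - lam) < A) by (apply Rlt_Rpower_l; lra). nra.
Qed.

Lemma le_gfloor_iff (n : nat) (b : R) : (1 <= n)%nat -> 0 <= b ->
  (n <= gfloor lam b)%nat <-> ginv lam n <= b.
Proof.
  intros Hn Hb. unfold gfloor. rewrite le_floor_iff by (left; apply g_pos).
  apply le_g_iff; auto.
Qed.

Lemma gfloor_le_gfloor (x y : R) : 0 <= x <= y -> (gfloor lam x <= gfloor lam y)%nat.
Proof.
  intro Hxy. unfold gfloor. apply le_floor_iff; [left; apply g_pos|].
  apply Rle_trans with (g lam x); [apply le_floor_iff; [left; apply g_pos | lia]|].
  apply g_le_g; auto.
Qed.

Lemma gfloor_tends_to_infinity :
  filterlim (gfloor lam) (Rbar_locally p_infty) eventually.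
Proof.
  intros P [N HN]. exists (Rmax 0 (ginv lam (Nat.max N 1))). intros b Hb.
  apply HN. apply Rmax_Rlt in Hb as [Hb0 HbN].
  assert (Hle : (Nat.max N 1 <= gfloor lam b)%nat)
    by (apply le_gfloor_iff; lia || lra).
  lia.
Qed.

End Reparametrization.

Lemma ex_series_bounded_nonneg (a : nat -> R) (M : R) :
  (forall n, 0 <= a n) -> (forall N, sum_n a N <= M) -> ex_series a.
Proof.
  intros Hpos Hbound.
  destruct (ex_finite_lim_seq_incr (sum_n a) M) as [l Hl]; [|exact Hbound|].
  - intro n. rewrite sum_Sn. generalize (Hpos (S n)). simpl. unfold plus; simpl. lra.
  - exists l. exact Hl.
Qed.

Lemma sum_n_le_Series (a : nat -> R) (N : nat) :
  (forall n, 0 <= a n) -> ex_series a -> sum_n a N <= Series a.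
Proof.
  intros Hpos [l Hl]. rewrite (is_series_unique a l Hl).
  apply (is_lim_seq_incr_compare (sum_n a) l Hl).
  intro n. rewrite sum_Sn. generalize (Hpos (S n)). simpl. unfold plus; simpl. lra.
Qed.

(* Sum_n 1/(n+1)^2 converges, since its N-th partial sum is <= 2 - 1/(N+1). *)
Lemma ex_series_inv_sq : ex_series (fun n => / (INR n + 1) ^ 2).
Proof.
  apply (ex_series_bounded_nonneg _ 2).
  { intro n. left. apply Rinv_0_lt_compat, pow_lt. generalize (pos_INR n); lra. }
  assert (Hpartial : forall N, sum_n (fun n => / (INR n + 1) ^ 2) N <= 2 - / (INR N + 1)).
  { induction N as [|N IH].
    - rewrite sum_O. simpl. lra.
    - rewrite sum_Sn, S_INR.
      change (sum_n (fun n => / (INR n + 1) ^ 2) N + / (INR N + 1 + 1) ^ 2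
              <= 2 - / (INR N + 1 + 1)).
      set (t := INR N) in *. assert (0 <= t) by apply pos_INR.
      assert (Hstep : / (t + 1 + 1) ^ 2 <= / (t + 1) - / (t + 1 + 1)).
      { replace (/ (t + 1) - / (t + 1 + 1)) with (/ ((t + 1) * (t + 1 + 1))) by (field; lra).
        apply Rinv_le_contravar; [apply Rmult_lt_0_compat|]; nra. }
      lra. }
  intro N. assert (0 < / (INR N + 1)) by (apply Rinv_0_lt_compat; generalize (pos_INR N); lra).
  generalize (Hpartial N). lra.
Qed.

(* Any power of t is eventually dominated by the stretched exponential
   exp(alpha t^beta); we need the cube to compare with Sum 1/n^2. *)
Lemma cube_le_stretched_exp (alpha beta : R) : 0 < alpha -> 0 < beta ->
  exists D, 0 < D /\ forall t, 1 <= t -> D * t ^ 3 <= exp (alpha * Rpower t beta).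
Proof.
  intros Halpha Hbeta.
  destruct (INR_unbounded (3 / beta)) as [k Hk].
  assert (Hk0 : 0 < INR k) by (apply Rlt_trans with (3 / beta); [apply Rdiv_lt_0_compat|]; lra).
  assert (Hkbeta : 3 <= INR k * beta).
  { apply Rmult_gt_compat_r with (r := beta) in Hk; [|lra].
    unfold Rdiv in Hk. rewrite Rmult_assoc, Rinv_l in Hk by lra. lra. }
  exists ((alpha / INR k) ^ k). split; [apply pow_lt, Rdiv_lt_0_compat; lra|].
  intros t Ht. set (P := Rpower t beta).
  assert (HP : 0 < P) by (unfold P, Rpower; apply exp_pos).
  assert (Hexp : exp (alpha * P) = exp (alpha / INR k * P) ^ k).
  { rewrite <- Rpower_pow by apply exp_pos. unfold Rpower. rewrite ln_exp.
    f_equal. field. lra. }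
  assert (Hcube : t ^ 3 <= P ^ k).
  { unfold P. rewrite <- !Rpower_pow, Rpower_mult by (lra || apply exp_pos).
    apply Rle_Rpower; [lra|]. simpl. lra. }
  rewrite Hexp. apply Rle_trans with ((alpha / INR k * P) ^ k).
  - rewrite Rpow_mult_distr. apply Rmult_le_compat_l; [|exact Hcube].
    left. apply pow_lt, Rdiv_lt_0_compat; lra.
  - apply pow_incr. split; [left; apply Rmult_lt_0_compat; [apply Rdiv_lt_0_compat|]; lra|].
    left. apply lt_exp_self.
Qed.

(* Real majorant of the n-th term of Psi(s) when Re s >= tau. *)
Definition Psi_majorant (lam tau : R) (n : nat) : R :=
  if isprime n then ln (INR n) / Rpower (INR n) lam * exp (- tau * ginv lam n) else 0.

Lemma Psi_majorant_nonneg (lam tau : R) (n : nat) : 0 <= Psi_majorant lam tau n.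
Proof.
  unfold Psi_majorant. destruct (isprime n) eqn:Hp; [|lra].
  apply Rmult_le_pos; [apply log_weight_nonneg | left; apply exp_pos].
  apply isprime_ge_2 in Hp. lia.
Qed.

(* Since ginv lam n grows like n^(1-lam), the majorant decays faster than 1/n^2. *)
Lemma Psi_majorant_le_inv_sq (lam tau : R) : 0 < lam < 1 -> 0 < tau ->
  exists K, forall n, Psi_majorant lam tau n <= K * / (INR n + 1) ^ 2.
Proof.
  intros Hlam Htau. set (alpha := tau / (1 - lam)).
  assert (Halpha : 0 < alpha) by (apply Rdiv_lt_0_compat; lra).
  destruct (cube_le_stretched_exp alpha (1 - lam) Halpha ltac:(lra)) as [D [HD Hdom]].
  set (K := exp alpha / D). assert (HK : 0 < K) by (apply Rdiv_lt_0_compat; [apply exp_pos | lra]).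
  exists (4 * K). intro n.
  assert (Hinv : 0 < / (INR n + 1) ^ 2)
    by (apply Rinv_0_lt_compat, pow_lt; generalize (pos_INR n); lra).
  unfold Psi_majorant. destruct (isprime n) eqn:Hp; [|nra].
  apply isprime_ge_2 in Hp. set (t := INR n).
  assert (Ht : 1 <= t) by (apply (le_INR 1); lia).
  (* L_n <= n, and exp(-tau ginv n) = e^alpha / exp(alpha n^(1-lam)) <= e^alpha / (D n^3). *)
  assert (Hweight : ln t / Rpower t lam <= t).
  { assert (1 <= Rpower t lam) by (apply Rpower_ge_1; lra).
    assert (0 <= ln t) by (rewrite <- ln_1; apply ln_le; lra).
    assert (ln t < t) by (rewrite <- (exp_ln t) at 2 by lra; apply lt_exp_self).
    unfold Rdiv. apply Rle_trans with (ln t * 1); [|lra].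
    apply Rmult_le_compat_l; [lra|]. rewrite <- Rinv_1. apply Rinv_le_contravar; lra. }
  assert (Hdecay : exp (- tau * ginv lam n) <= exp alpha / (D * t ^ 3)).
  { replace (exp (- tau * ginv lam n)) with (exp alpha / exp (alpha * Rpower t (1 - lam))).
    - unfold Rdiv. apply Rmult_le_compat_l; [left; apply exp_pos|].
      apply Rinv_le_contravar; [apply Rmult_lt_0_compat; [|apply pow_lt]; lra | apply Hdom, Ht].
    - unfold Rdiv. rewrite <- exp_Ropp, <- exp_plus. f_equal. unfold ginv, alpha, t. field. lra. }
  apply Rle_trans with (t * (exp alpha / (D * t ^ 3))).
  { apply Rmult_le_compat; [apply log_weight_nonneg; lia | left; apply exp_pos | |]; assumption. }
  (* 1/n^2 <= 4/(n+1)^2 for n >= 1. *)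
  replace (t * (exp alpha / (D * t ^ 3))) with (K * / t ^ 2) by (unfold K; field; lra).
  replace (4 * K * / (t + 1) ^ 2) with (K * / ((t + 1) ^ 2 / 4)) by (field; lra).
  apply Rmult_le_compat_l; [lra|].
  apply Rinv_le_contravar; [apply Rdiv_lt_0_compat; [apply pow_lt|]|]; nra.
Qed.

Lemma Psi_majorant_ex_series (lam tau : R) : 0 < lam < 1 -> 0 < tau ->
  ex_series (Psi_majorant lam tau).
Proof.
  intros Hlam Htau. destruct (Psi_majorant_le_inv_sq lam tau Hlam Htau) as [K HK].
  apply (ex_series_le (V := R_CompleteNormedModule) _ (fun n => scal K (/ (INR n + 1) ^ 2))).
  - intro n. change (Rabs (Psi_majorant lam tau n) <= K * / (INR n + 1) ^ 2).
    rewrite Rabs_pos_eq by apply Psi_majorant_nonneg. apply HK.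
  - apply (ex_series_scal_l (V := R_NormedModule)), ex_series_inv_sq.
Qed.

Lemma Psi_term_prime (lam : R) (s : C) (n : nat) : isprime n = true ->
  Psi_term lam s n =
  (RtoC (ln (INR n) / Rpower (INR n) lam) * Cexp (- s * RtoC (ginv lam n)))%C.
Proof.
  intro Hp. unfold Psi_term. rewrite Hp, Cinv_Cexp. fold (ginv lam n).
  f_equal. f_equal. ring.
Qed.

Lemma Cmod_Psi_term_le (lam : R) (s : C) (tau : R) (n : nat) :
  0 < lam < 1 -> 0 <= tau <= Re s -> Cmod (Psi_term lam s n) <= Psi_majorant lam tau n.
Proof.
  intros Hlam Htau. unfold Psi_majorant. destruct (isprime n) eqn:Hp.
  - rewrite Psi_term_prime, Cmod_mult, Cmod_R, Cmod_Cexp by exact Hp.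
    apply isprime_ge_2 in Hp.
    rewrite Rabs_pos_eq by (apply log_weight_nonneg; lia).
    apply Rmult_le_compat_l; [apply log_weight_nonneg; lia|].
    apply exp_le_mono. assert (0 <= ginv lam n) by (apply ginv_nonneg; lia || lra).
    destruct s as [s1 s2]; simpl in *. nra.
  - unfold Psi_term. rewrite Hp, Cmod_0. lra.
Qed.

Lemma Psi_converges (lam : R) (s : C) : 0 < lam < 1 -> 0 < Re s ->
  exists Psi : C, is_series (Psi_term lam s) Psi.
Proof.
  intros Hlam Hs.
  apply (ex_series_le (K := C_AbsRing) (V := C_CompleteNormedModule) _ (Psi_majorant lam (Re s))).
  - intro n. apply Cmod_Psi_term_le; lra.
  - apply Psi_majorant_ex_series; lra.
Qed.

Lemma is_lim_exp_decay (k K : R) : 0 < k ->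
  is_lim (fun b => K * exp (- (k * b))) p_infty 0.
Proof.
  intro Hk. replace (Finite 0) with (Rbar_mult K 0) by (simpl; f_equal; ring).
  apply is_lim_scal_l. apply (is_lim_comp exp _ _ _ m_infty); [apply is_lim_exp_m| |].
  - replace m_infty with (Rbar_opp (Rbar_mult k p_infty)).
    + apply is_lim_opp, is_lim_scal_l, is_lim_id.
    + simpl. destruct (Rle_dec 0 k); [|lra]. destruct (Rle_lt_or_eq_dec 0 k r); [reflexivity|lra].
  - exists 0. intros. discriminate.
Qed.

Lemma is_lim_series_along (a : nat -> C) (Psi : C) (N : R -> nat) :
  is_series a Psi -> filterlim N (Rbar_locally p_infty) eventually ->
  is_lim (fun b => Cmod (sum_n a (N b) - Psi)) p_infty 0.
Proof.
  intros Hseries HN.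
  change (filterlim (fun b => Cmod (sum_n a (N b) - Psi)) (Rbar_locally p_infty) (locally 0)).
  apply <- (filterlim_locally_ball_norm (K := R_AbsRing) (U := R_NormedModule)
              (F := Rbar_locally p_infty)).
  intro eps. generalize (HN _ (proj1 (filterlim_locally_ball_norm _ _) Hseries eps)).
  unfold filtermap. apply filter_imp. intros b Hb.
  unfold ball_norm in *. change (Rabs (Cmod (sum_n a (N b) - Psi) - 0) < eps).
  rewrite Rminus_0_r, Rabs_pos_eq by apply Cmod_ge_0. exact Hb.
Qed.

Lemma tends_to_of_Cmod_le (f : R -> C) (l : C) (e : R -> R) :
  is_lim e p_infty 0 -> (forall b, 0 <= b -> Cmod (f b - l) <= e b) ->
  filterlim f (Rbar_locally p_infty) (locally l).
Proof.
  intros He Hbound. change (filterlim e (Rbar_locally p_infty) (locally 0)) in He.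
  apply <- (filterlim_locally_ball_norm (K := C_AbsRing) (U := C_NormedModule)
              (F := Rbar_locally p_infty)).
  intro eps.
  assert (Hsmall := proj1 (filterlim_locally_ball_norm (K := R_AbsRing) _ _) He eps).
  assert (Hpos : Rbar_locally p_infty (fun b => 0 <= b)) by (exists 0; intros; lra).
  generalize (filter_and _ _ Hsmall Hpos). apply filter_imp.
  intros b [Hb Hb0]. unfold ball_norm in *.
  change (Cmod (f b - l) < eps). change (Rabs (e b - 0) < eps) in Hb.
  specialize (Hbound b Hb0). apply Rabs_def2 in Hb. lra.
Qed.

Lemma is_RInt_gen_of_partial {V : NormedModule R_AbsRing}
  (f : R -> V) (F : R -> V) (a : R) (l : V) :
  (forall b, a <= b -> is_RInt f a b (F b)) ->
  filterlim F (Rbar_locally p_infty) (locally l) ->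
  is_RInt_gen f (at_point a) (Rbar_locally p_infty) l.
Proof.
  intros Hpartial Hlim.
  apply filterlimi_lim_ext_loc with (f := fun ab => F (snd ab)).
  - apply Filter_prod with (Q := fun x => x = a) (R := fun b => a < b).
    + reflexivity.
    + exists a. auto.
    + intros x b -> Hb. simpl. apply Hpartial. lra.
  - eapply filterlim_comp; [apply filterlim_snd | exact Hlim].
Qed.

Section PartialLaplace.
Variables (lam c : R) (s : C).
Hypothesis hlam0 : 0 < lam.
Hypothesis hlam1 : lam < 1.
Hypothesis hc : 0 < c.
Hypothesis hs : 0 < Re s.

(* kappa = c(1-lam) is the decay rate of exp[-c g(x)^(1-lam)] in x, and the
   terms of W(g(x)) are damped by e^(-zeta x), zeta = kappa + s. *)
Let kappa : R := c * (1 - lam).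
Let zeta : C := (RtoC kappa + s)%C.

Lemma kappa_pos : 0 < kappa.
Proof. unfold kappa. nra. Qed.

Lemma s_neq0 : s <> 0%C.
Proof. intro Hs0. rewrite Hs0 in hs. simpl in hs. lra. Qed.

Lemma zeta_neq0 : zeta <> 0%C.
Proof.
  intro Hz. assert (Hre : Re zeta = 0) by (rewrite Hz; reflexivity).
  change (kappa + Re s = 0) in Hre. generalize kappa_pos. lra.
Qed.

Lemma Cexp_zeta (x : R) :
  Cexp (- zeta * RtoC x) = (RtoC (exp (- (kappa * x))) * Cexp (- s * RtoC x))%C.
Proof.
  rewrite <- Cexp_RtoC, <- Cexp_add. f_equal. unfold zeta.
  destruct s as [s1 s2]. unfold Copp, Cplus, Cmult, RtoC; simpl. f_equal; ring.
Qed.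

Definition W_step (n : nat) (x : R) : R :=
  if isprime n then if Rle_dec (ginv lam n) x then w lam c (INR n) else 0 else 0.

Lemma W_g_as_steps (x b : R) : 0 <= x <= b ->
  W lam c (g lam x) = sum_f_R0 (fun n => W_step n x) (gfloor lam b).
Proof.
  intro Hx. unfold W. fold (gfloor lam x).
  rewrite (sum_f_R0_truncate _ _ _ (gfloor_le_gfloor lam hlam0 hlam1 x b Hx)).
  apply sum_eq. intros n _. unfold W_step. destruct (isprime n) eqn:Hp.
  - apply isprime_ge_2 in Hp.
    assert (Hiff := le_gfloor_iff lam hlam0 hlam1 n x ltac:(lia) ltac:(lra)).
    destruct (le_dec n (gfloor lam x)); destruct (Rle_dec (ginv lam n) x);
      try reflexivity; exfalso; tauto.
  - destruct (le_dec n (gfloor lam x)); reflexivity.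
Qed.

Lemma inv_exp_c_g (x : R) : 0 <= x ->
  / exp (c * Rpower (g lam x) (1 - lam)) = exp (- c) * exp (- (kappa * x)).
Proof.
  intro Hx. rewrite g_Rpower by auto. rewrite <- exp_Ropp, <- exp_plus.
  f_equal. unfold kappa. ring.
Qed.

Lemma integrand_as_steps (x b : R) : 0 <= x <= b ->
  laplace_integrand lam c s x =
  (sum_n (fun n => RtoC (W_step n x * exp (- c)) * Cexp (- zeta * RtoC x))
     (gfloor lam b) - Cexp (- s * RtoC x))%C.
Proof.
  intro Hx.
  assert (Hterm : forall n, (RtoC (W_step n x * exp (- c)) * Cexp (- zeta * RtoC x))%C
                            = (RtoC (W_step n x) * (RtoC (exp (- c)) * Cexp (- zeta * RtoC x)))%C)
    by (intro n; rewrite RtoC_mult; ring).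
  rewrite (sum_n_ext _ _ _ Hterm), <- RtoC_sum_f_R0_mult, <- (W_g_as_steps x b Hx).
  unfold laplace_integrand, h, Rdiv. rewrite inv_exp_c_g, Cexp_zeta by lra.
  rewrite RtoC_minus, !RtoC_mult.
  replace (Copp s * RtoC x)%C with (- s * RtoC x)%C by reflexivity. ring.
Qed.

(* a_n = w(n) e^(-c): the coefficient of e^(-zeta x) contributed by the prime n. *)
Definition prime_jump (n : nat) : R := if isprime n then w lam c (INR n) * exp (- c) else 0.

Lemma w_exp_neg_c (n : nat) : (1 <= n)%nat ->
  w lam c (INR n) * exp (- c) =
  kappa * (ln (INR n) / Rpower (INR n) lam) * exp (kappa * ginv lam n).
Proof.
  intro Hn. assert (HP : 0 < Rpower (INR n) lam) by (unfold Rpower; apply exp_pos).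
  unfold w.
  replace (exp (kappa * ginv lam n)) with (exp (c * Rpower (INR n) (1 - lam)) * exp (- c)).
  - unfold kappa. field. lra.
  - rewrite <- exp_plus. f_equal. unfold kappa, ginv. field. lra.
Qed.

(* At the entry point of the prime n, a_n e^(-zeta ginv n) = kappa Psi_term n:
   this is where the terms of Psi(s) come from. *)
Lemma prime_jump_at_entry (n : nat) : isprime n = true ->
  (RtoC (prime_jump n) * Cexp (- zeta * RtoC (ginv lam n)))%C = (RtoC kappa * Psi_term lam s n)%C.
Proof.
  intro Hp. rewrite Psi_term_prime, Cexp_zeta by exact Hp.
  unfold prime_jump. rewrite Hp, w_exp_neg_c by (apply isprime_ge_2 in Hp; lia).
  set (L := ln (INR n) / Rpower (INR n) lam).
  assert (Hcancel : exp (kappa * ginv lam n) * exp (- (kappa * ginv lam n)) = 1)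
    by (rewrite <- exp_plus, Rplus_opp_r; apply exp_0).
  transitivity (RtoC (kappa * L * (exp (kappa * ginv lam n) * exp (- (kappa * ginv lam n))))
                * Cexp (- s * RtoC (ginv lam n)))%C.
  - rewrite !RtoC_mult. ring.
  - rewrite Hcancel, Rmult_1_r, RtoC_mult. ring.
Qed.

Lemma is_RInt_step (n : nat) (b : R) : 0 <= b -> (n <= gfloor lam b)%nat ->
  is_RInt (V := C_R_NormedModule)
    (fun x => RtoC (W_step n x * exp (- c)) * Cexp (- zeta * RtoC x))%C 0 b
    ((RtoC kappa * Psi_term lam s n - Cexp (- zeta * RtoC b) * RtoC (prime_jump n)) / zeta)%C.
Proof.
  intros Hb Hn. unfold W_step. destruct (isprime n) eqn:Hp.
  - assert (Hn1 : (1 <= n)%nat) by (apply isprime_ge_2 in Hp; lia).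
    assert (Hentry := prime_jump_at_entry n Hp).
    assert (Hx0 : 0 <= ginv lam n) by (apply ginv_nonneg; auto).
    assert (Hxb : ginv lam n <= b) by (apply (le_gfloor_iff lam); auto).
    match goal with |- is_RInt _ _ _ ?v => rewrite <- (plus_zero_l (G := C_R_NormedModule) v) end.
    apply (is_RInt_Chasles (V := C_R_NormedModule)) with (b := ginv lam n).
    + eapply is_RInt_ext; [|apply is_RInt_C_zero].
      intros x Hx. rewrite Rmin_left, Rmax_right in Hx by lra.
      destruct (Rle_dec (ginv lam n) x); [lra|]. rewrite Rmult_0_l, Cmult_0_l. reflexivity.
    + replace ((RtoC kappa * Psi_term lam s n
                  - Cexp (- zeta * RtoC b) * RtoC (prime_jump n)) / zeta)%C
        with (RtoC (prime_jump n) / - zeta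
          * (Cexp (- zeta * RtoC b) - Cexp (- zeta * RtoC (ginv lam n))))%C
        by (rewrite <- Hentry; field; apply zeta_neq0).
      eapply is_RInt_ext; [|apply is_RInt_Cexp, Copp_neq0, zeta_neq0].
      intros x Hx. rewrite Rmin_left, Rmax_right in Hx by lra.
      destruct (Rle_dec (ginv lam n) x); [|lra]. unfold prime_jump. rewrite Hp. reflexivity.
  - unfold Psi_term, prime_jump. rewrite Hp.
    replace ((RtoC kappa * RtoC 0 - Cexp (- zeta * RtoC b) * RtoC 0) / zeta)%C with (RtoC 0)
      by (field; apply zeta_neq0).
    eapply is_RInt_ext; [|apply is_RInt_C_zero].
    intros x _. rewrite Rmult_0_l, Cmult_0_l. reflexivity.
Qed.

Lemma is_RInt_steps (b : R) (N : nat) : 0 <= b -> (N <= gfloor lam b)%nat ->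
  is_RInt (V := C_R_NormedModule)
    (fun x => sum_n (fun n => RtoC (W_step n x * exp (- c)) * Cexp (- zeta * RtoC x))%C N) 0 b
    (sum_n (fun n => (RtoC kappa * Psi_term lam s n
                      - Cexp (- zeta * RtoC b) * RtoC (prime_jump n)) / zeta)%C N).
Proof.
  intro Hb. induction N as [|N IH]; intro HN.
  - eapply is_RInt_ext; [|rewrite sum_O; apply is_RInt_step; auto].
    intros x _. rewrite sum_O. reflexivity.
  - eapply is_RInt_ext; [|rewrite sum_n_C_succ; apply (is_RInt_plus (V := C_R_NormedModule));
                          [apply IH; lia | apply is_RInt_step; auto]].
    intros x _. rewrite sum_n_C_succ. reflexivity.
Qed.

Definition partial_laplace (b : R) : C :=
  ((RtoC kappa * sum_n (Psi_term lam s) (gfloor lam b)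
    - Cexp (- zeta * RtoC b) * sum_n (fun n => RtoC (prime_jump n)) (gfloor lam b)) / zeta
   - (1 - Cexp (- s * RtoC b)) / s)%C.

Lemma is_RInt_partial_laplace (b : R) : 0 <= b ->
  is_RInt (V := C_R_NormedModule) (laplace_integrand lam c s) 0 b (partial_laplace b).
Proof.
  intro Hb. unfold partial_laplace. rewrite <- sum_n_C_lin.
  replace ((1 - Cexp (- s * RtoC b)) / s)%C
    with (1 / - s * (Cexp (- s * RtoC b) - Cexp (- s * RtoC 0)))%C.
  - eapply is_RInt_ext.
    + intros x Hx. rewrite Rmin_left, Rmax_right in Hx by lra.
      symmetry. apply (integrand_as_steps x b). lra.
    + apply (is_RInt_minus (V := C_R_NormedModule)); [apply is_RInt_steps; auto|].
      eapply is_RInt_ext; [|apply is_RInt_Cexp, Copp_neq0, s_neq0].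
      intros x _. apply Cmult_1_l.
  - rewrite Cmult_0_r, Cexp_RtoC, exp_0. field. apply s_neq0.
Qed.

Lemma prime_jump_nonneg (n : nat) : 0 <= prime_jump n.
Proof.
  unfold prime_jump. destruct (isprime n) eqn:Hp; [|lra].
  apply isprime_ge_2 in Hp. rewrite w_exp_neg_c by lia.
  apply Rmult_le_pos; [apply Rmult_le_pos; [left; apply kappa_pos | apply log_weight_nonneg; lia]|].
  left. apply exp_pos.
Qed.

(* A prime counted up to b has entered before b, so its growth e^(kappa ginv n)
   is absorbed by the damping e^(-(kappa + Re s) b), leaving half of Re s to
   spare on both ginv n and b. *)
Lemma prime_jump_damped_le (n : nat) (b : R) : 0 <= b -> (n <= gfloor lam b)%nat ->
  prime_jump n * exp (- ((kappa + Re s) * b))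
  <= kappa * Psi_majorant lam (Re s / 2) n * exp (- (Re s / 2 * b)).
Proof.
  intros Hb Hn. unfold prime_jump, Psi_majorant. destruct (isprime n) eqn:Hp; [|lra].
  apply isprime_ge_2 in Hp.
  assert (Hx0 : 0 <= ginv lam n) by (apply ginv_nonneg; auto; lia).
  assert (Hxb : ginv lam n <= b) by (apply (le_gfloor_iff lam); auto; lia).
  rewrite w_exp_neg_c by lia. rewrite !Rmult_assoc, <- !exp_plus.
  apply Rmult_le_compat_l; [left; apply kappa_pos|].
  apply Rmult_le_compat_l; [apply log_weight_nonneg; lia|].
  apply exp_le_mono. generalize kappa_pos. nra.
Qed.

Lemma tail_term_bound (b : R) : 0 <= b ->
  Cmod (Cexp (- zeta * RtoC b) * sum_n (fun n => RtoC (prime_jump n)) (gfloor lam b) / zeta)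
  <= kappa * Series (Psi_majorant lam (Re s / 2)) / Cmod zeta * exp (- (Re s / 2 * b)).
Proof.
  intro Hb. assert (Hz : 0 < Cmod zeta) by apply Cmod_gt_0, zeta_neq0.
  assert (Hre : Re (- zeta * RtoC b) = - ((kappa + Re s) * b))
    by (unfold zeta; destruct s; simpl; ring).
  unfold Cdiv. rewrite !Cmod_mult, Cmod_Cexp, Cmod_inv, Hre by apply zeta_neq0.
  set (N := gfloor lam b).
  assert (Hsum : exp (- ((kappa + Re s) * b)) * Cmod (sum_n (fun n => RtoC (prime_jump n)) N)
                 <= kappa * sum_n (Psi_majorant lam (Re s / 2)) N * exp (- (Re s / 2 * b))).
  { eapply Rle_trans; [apply Rmult_le_compat_l; [left; apply exp_pos | apply Cmod_sum_n_le]|].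
    rewrite sum_n_Reals.
    replace (kappa * sum_f_R0 (Psi_majorant lam (Re s / 2)) N * exp (- (Re s / 2 * b)))
      with (kappa * exp (- (Re s / 2 * b)) * sum_f_R0 (Psi_majorant lam (Re s / 2)) N) by ring.
    rewrite !scal_sum. apply sum_Rle. intros n Hn.
    rewrite Cmod_R, Rabs_pos_eq by apply prime_jump_nonneg.
    replace (Psi_majorant lam (Re s / 2) n * (kappa * exp (- (Re s / 2 * b))))
      with (kappa * Psi_majorant lam (Re s / 2) n * exp (- (Re s / 2 * b))) by ring.
    apply prime_jump_damped_le; auto. }
  assert (Hpartial : sum_n (Psi_majorant lam (Re s / 2)) N <= Series (Psi_majorant lam (Re s / 2))).
  { apply sum_n_le_Series; [apply Psi_majorant_nonneg|]. apply Psi_majorant_ex_series; lra. }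
  apply Rle_trans
    with (kappa * sum_n (Psi_majorant lam (Re s / 2)) N * exp (- (Re s / 2 * b)) / Cmod zeta).
  - unfold Rdiv. apply Rmult_le_compat_r; [left; apply Rinv_0_lt_compat; lra | exact Hsum].
  - replace (kappa * Series (Psi_majorant lam (Re s / 2)) / Cmod zeta * exp (- (Re s / 2 * b)))
      with (kappa * Series (Psi_majorant lam (Re s / 2)) * exp (- (Re s / 2 * b)) / Cmod zeta)
      by (field; lra).
    apply Rmult_le_compat_r; [left; apply Rinv_0_lt_compat; lra|].
    apply Rmult_le_compat_r; [left; apply exp_pos|].
    apply Rmult_le_compat_l; [left; apply kappa_pos | exact Hpartial].
Qed.

Lemma partial_laplace_error (Psi : C) (b : R) : 0 <= b ->
  Cmod (partial_laplace b - (RtoC kappa / zeta * Psi - / s))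
  <= Cmod (RtoC kappa / zeta) * Cmod (sum_n (Psi_term lam s) (gfloor lam b) - Psi)
     + kappa * Series (Psi_majorant lam (Re s / 2)) / Cmod zeta * exp (- (Re s / 2 * b))
     + / Cmod s * exp (- (Re s * b)).
Proof.
  intro Hb.
  replace (partial_laplace b - (RtoC kappa / zeta * Psi - / s))%C
    with (RtoC kappa / zeta * (sum_n (Psi_term lam s) (gfloor lam b) - Psi)
          - Cexp (- zeta * RtoC b) * sum_n (fun n => RtoC (prime_jump n)) (gfloor lam b) / zeta
          + Cexp (- s * RtoC b) / s)%C
    by (unfold partial_laplace; field; split; [apply s_neq0 | apply zeta_neq0]).
  eapply Rle_trans; [apply Cmod_triangle|]. apply Rplus_le_compat.
  - eapply Rle_trans; [apply Cmod_triangle|]. rewrite Cmod_opp, <- Cmod_mult.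
    apply Rplus_le_compat_l, tail_term_bound, Hb.
  - rewrite Cmod_div, Cmod_Cexp by apply s_neq0. right.
    replace (Re (- s * RtoC b)) with (- (Re s * b)) by (destruct s; simpl; ring).
    unfold Rdiv. apply Rmult_comm.
Qed.

Lemma partial_laplace_tends_to (Psi : C) : is_series (Psi_term lam s) Psi ->
  filterlim partial_laplace (Rbar_locally p_infty) (locally (RtoC kappa / zeta * Psi - / s)%C).
Proof.
  intro HPsi. eapply tends_to_of_Cmod_le; [|apply partial_laplace_error].
  replace (Finite 0) with (Finite (Cmod (RtoC kappa / zeta) * 0 + 0 + 0)) by (f_equal; ring).
  apply is_lim_plus'; [apply is_lim_plus'|apply is_lim_exp_decay; lra].
  - apply (is_lim_scal_l _ _ p_infty 0), is_lim_series_along; [exact HPsi|].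
    apply gfloor_tends_to_infinity; auto.
  - apply is_lim_exp_decay. lra.
Qed.

End PartialLaplace.

Theorem mainTheorem10 (lam c : R) (hlam0 : 0 < lam) (hlam1 : lam < 1)
  (hc : 0 < c) (s : C) (hs : 0 < Re s) :
  exists Psi : C,
    is_series (Psi_term lam s) Psi /\
    is_RInt_gen (laplace_integrand lam c s) (at_point 0) (Rbar_locally p_infty)
      (Cminus
         (Cmult (Cdiv (RtoC (c * (1 - lam))) (Cplus (RtoC (c * (1 - lam))) s)) Psi)
         (Cinv s)).
Proof.
  destruct (Psi_converges lam s (conj hlam0 hlam1) hs) as [Psi HPsi].
  exists Psi. split; [exact HPsi|].
  apply (is_RInt_gen_of_partial _ (partial_laplace lam c s)).
  - intros b Hb. apply is_RInt_partial_laplace; auto.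
  - apply partial_laplace_tends_to; auto.
Qed.
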